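(* Let $\mathcal{C}_1$ and $\mathcal{C}_2$ be two maximal commuting classes of two-qubit Pauli operators ($d=4$) that belong to a complete set of maximal commuting classes. Then there do not exist two further maximal commuting Pauli classes $\mathcal{C}_3'$ and $\mathcal{C}_4'$ (with $\mathcal{C}_1,\mathcal{C}_2,\mathcal{C}_3',\mathcal{C}_4'$ pairwise disjoint) such that the common eigenbases of $\mathcal{C}_1,\mathcal{C}_2,\mathcal{C}_3',\mathcal{C}_4'$ form a weakly unextendible set of four mutually unbiased bases in $\mathbb{C}^4$.
   Context: Two-qubit Pauli operators are the tensor products $P_1\otimes P_2$ with $P_k\in\{I,X,Y,Z\}$. A maximal commuting class in $d=4$ is a set of $3$ mutually commuting non-identity two-qubit Pauli operators. A complete set of classes is a family of $5$ pairwise disjoint maximal commuting classes whose union is the set of all $15$ non-identity two-qubit Pauli operators. Two orthonormal bases of $\mathbb{C}^d$ are mutually unbiased if $|\langle a|b\rangle|=1/\sqrt d$ for all vectors $a$ of the first and $b$ of the second; common eigenbases of pairwise disjoint maximal commuting Pauli classes are mutually unbiased. A set of mutually unbiased bases obtained as common eigenbases of Pauli classes is weakly unextendible if there is no further basis, unbiased to all of them, that is the common eigenbasis of a maximal commuting class of Pauli operators. *)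

From mathcomp Require Import all_boot all_order all_algebra all_field.
Set Implicit Arguments. Unset Strict Implicit. Unset Printing Implicit Defensive.
Import Order.TTheory GRing.Theory Num.Theory.
Local Open Scope ring_scope.

(* single-qubit Paulis, indexed 0 = I, 1 = X, 2 = Y, 3 = Z *)
Definition pauli1 (k : 'I_4) : 'M[algC]_2 :=
  \matrix_(i < 2, j < 2)
    match val k with
    | 0 => if i == j then 1 else 0
    | 1 => if i == j then 0 else 1
    | 2 => if i == j then 0 else (if val i == 0%N then - 'i else 'i)
    | _ => if i == j then (if val i == 0%N then 1 else -1) else 0
    end.

Definition kron2 (A B : 'M[algC]_2) : 'M[algC]_4 :=
  \matrix_(r < 4, c < 4)
    (A (inord (r %/ 2)) (inord (c %/ 2)) * B (inord (r %% 2)) (inord (c %% 2))).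

Definition pauli := ('I_4 * 'I_4)%type.
Definition pmx (p : pauli) : 'M[algC]_4 := kron2 (pauli1 p.1) (pauli1 p.2).
Definition nonid (p : pauli) : bool := p != (ord0, ord0).

Definition maxclass (C : {set pauli}) : Prop :=
  #|C| = 3%N /\ (forall p, p \in C -> nonid p) /\
  (forall p q, p \in C -> q \in C -> pmx p *m pmx q = pmx q *m pmx p).

Definition complete_set (S : {set {set pauli}}) : Prop :=
  #|S| = 5%N /\ (forall C, C \in S -> maxclass C) /\ trivIset S /\
  cover S = [set p | nonid p].

Definition dotv (u v : 'cV[algC]_4) : algC := \sum_(k < 4) (u k 0)^* * v k 0.
Definition onb (B : 'M[algC]_4) : Prop :=
  forall i j : 'I_4, dotv (col i B) (col j B) = (i == j)%:R.

Definition unbiased (B B' : 'M[algC]_4) : Prop :=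
  forall i j : 'I_4, `|dotv (col i B) (col j B')| = (sqrtC 4%:R)^-1.

Definition eigbasis (C : {set pauli}) (B : 'M[algC]_4) : Prop :=
  onb B /\ forall p, p \in C -> forall j : 'I_4,
    exists lam : algC, pmx p *m col j B = lam *: col j B.

Definition mub_set (Bs : seq 'M[algC]_4) : Prop :=
  (forall B, B \in Bs -> onb B) /\
  forall i j, (i < size Bs)%N -> (j < size Bs)%N -> i != j ->
    unbiased (nth 0 Bs i) (nth 0 Bs j).

Definition weakly_unextendible (Bs : seq 'M[algC]_4) : Prop :=
  mub_set Bs /\
  ~ (exists (C : {set pauli}) (B : 'M[algC]_4),
        maxclass C /\ eigbasis C B /\ forall B0, B0 \in Bs -> unbiased B0 B).

(* In dimension 4 the maximal commuting Pauli classes are the 15 lines of the symplectic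
   quadrangle W(2), and any four pairwise disjoint lines extend to a fifth line t5 disjoint
   from all of them (a finite check).  Every element of t5 anticommutes with some element of a class t disjoint from it.
   Hence a unit eigenvector a of t has zero expectation on t5 = {P, Q, PQ}, and the vectors
   (1 +- P)(1 +- Q) a / 2 form an orthonormal common eigenbasis of t5.  This basis is unbiased
   to every eigenbasis of such a t: for eigenvectors a of t and b of t5, the vectors M a with
   M in {1} u t5 are orthonormal while |<M a, b>| = |<a, b>|, so 4 |<a, b>|^2 = 1.  The four
   given bases thus extend by a Pauli eigenbasis, against weak unextendibility. *)

From mathcomp Require Import all_boot all_order all_algebra all_field.
From mathcomp Require Import ring.
Set Implicit Arguments. Unset Strict Implicit. Unset Printing Implicit Defensive.
Import Order.TTheory GRing.Theory Num.Theory.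
Local Open Scope ring_scope.

Lemma hermsymmxP n (M : 'M[algC]_n) :
  reflect (forall i j, M j i = (M i j)^*) (M \is hermsymmx).
Proof.
rewrite is_hermitianmxE expr0 scale1r; apply: (iffP eqP) => [hM i j | hM].
  by rewrite {1}hM !mxE.
by apply/matrixP => i j; rewrite !mxE hM.
Qed.

(** * Pauli matrices *)

Ltac case_I4 a := case: a => [[|[|[|[|?]]]] ?] //.
Ltac case_I2 a := case: a => [[|[|?]] ?] //.

Definition ords4 : seq 'I_4 :=
  [:: ord0; Ordinal (isT : 1 < 4)%N; Ordinal (isT : 2 < 4)%N; Ordinal (isT : 3 < 4)%N].

Lemma mem_ords4 a : a \in ords4.
Proof. by case_I4 a. Qed.

(* With I, X, Y, Z labelled by the bit strings 00, 01, 10, 11, multiplying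
   single-qubit Paulis XORs the labels, up to a phase. *)
Definition pauli1_idx (a b : 'I_4) : 'I_4 := nth ord0 ords4 (Nat.lxor a b).

Definition pauli1_phase (a b : 'I_4) : algC :=
  match val a, val b with
  | 1, 2 | 2, 3 | 3, 1 => 'i
  | 2, 1 | 3, 2 | 1, 3 => - 'i
  | _, _ => 1
  end.

Definition pauli1_anti (a b : 'I_4) : bool := [&& val a != 0, val b != 0 & val a != val b]%N.

Lemma pauli1_I : pauli1 ord0 = 1%:M.
Proof. by apply/matrixP => i j; rewrite !mxE; case: (i == j). Qed.

Lemma pauli1_mul a b :
  pauli1 a *m pauli1 b = pauli1_phase a b *: pauli1 (pauli1_idx a b).
Proof.
apply/matrixP => i j; rewrite !mxE !big_ord_recr !big_ord0 /= !mxE.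
case_I4 a; case_I4 b; case_I2 i; case_I2 j;
  rewrite /pauli1_phase /= ?mulrN ?mulNr ?opprK -?expr2 ?sqrCi; ring.
Qed.

Lemma pauli1_phase_neq0 a b : pauli1_phase a b != 0.
Proof. by case_I4 a; case_I4 b; rewrite /pauli1_phase /= ?oppr_eq0 ?neq0Ci ?oner_eq0. Qed.

Lemma pauli1_sq a : pauli1 a *m pauli1 a = 1%:M.
Proof. by rewrite pauli1_mul; case_I4 a; rewrite scale1r pauli1_I. Qed.

Lemma pauli1_comm a b :
  pauli1 a *m pauli1 b = (-1) ^+ pauli1_anti a b *: (pauli1 b *m pauli1 a).
Proof.
apply/matrixP => i j; rewrite !mxE !big_ord_recr !big_ord0 /= !mxE.
case_I4 a; case_I4 b; case_I2 i; case_I2 j;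
  rewrite /= ?mulrN ?mulNr ?opprK -?expr2 ?sqrCi; ring.
Qed.

Lemma pauli1_hermitian a : pauli1 a \is hermsymmx.
Proof.
apply/hermsymmxP => i j; rewrite !mxE.
case_I4 a; case_I2 i; case_I2 j; rewrite /= ?conjC0 ?conjC1 ?conjCN1 ?conjCi ?opprK //.
by rewrite -conjCi; exact: (esym (conjCK _)).
Qed.

Definition kron_idx (r : 'I_4) : 'I_2 * 'I_2 := (inord (r %/ 2), inord (r %% 2)).

Lemma kron_idx_bij : bijective kron_idx.
Proof.
exists (fun ij : 'I_2 * 'I_2 => inord (ij.1 * 2 + ij.2) : 'I_4).
- by move=> r; apply/val_inj; case_I4 r; rewrite /= !inordK.
- by case=> i j; case_I2 i; case_I2 j; congr pair; apply/val_inj; rewrite /= !inordK.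
Qed.

Lemma kron2E (A B : 'M[algC]_2) r c :
  kron2 A B r c = A (kron_idx r).1 (kron_idx c).1 * B (kron_idx r).2 (kron_idx c).2.
Proof. by rewrite mxE. Qed.

Lemma kron2_mul (A B C D : 'M[algC]_2) :
  kron2 A B *m kron2 C D = kron2 (A *m C) (B *m D).
Proof.
apply/matrixP => r c; rewrite kron2E !mxE big_distrlr pair_big /=.
rewrite (reindex kron_idx); last exact/onW_bij/kron_idx_bij.
by apply: eq_bigr => k _; rewrite !kron2E; ring.
Qed.

Lemma kron2Z (a b : algC) (A B : 'M[algC]_2) :
  kron2 (a *: A) (b *: B) = (a * b) *: kron2 A B.
Proof. by apply/matrixP => r c; rewrite !mxE; ring. Qed.

Lemma kron2_1 : kron2 1%:M 1%:M = 1%:M.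
Proof.
apply/matrixP => r c; rewrite kron2E !mxE -natrM mulnb -xpair_eqE.
by rewrite (inj_eq (bij_inj kron_idx_bij)).
Qed.

Lemma kron2_hermitian (A B : 'M[algC]_2) :
  A \is hermsymmx -> B \is hermsymmx -> kron2 A B \is hermsymmx.
Proof.
move=> /hermsymmxP hA /hermsymmxP hB; apply/hermsymmxP => i j.
by rewrite !kron2E hA hB rmorphM.
Qed.

Definition pauli_anti (p q : pauli) : bool := pauli1_anti p.1 q.1 (+) pauli1_anti p.2 q.2.

Definition pauli_commute (p q : pauli) : bool := ~~ pauli_anti p q.

Definition pauli_idx (p q : pauli) : pauli := (pauli1_idx p.1 q.1, pauli1_idx p.2 q.2).

Definition pauli_phase (p q : pauli) : algC := pauli1_phase p.1 q.1 * pauli1_phase p.2 q.2.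

Lemma pmx_I : pmx (ord0, ord0) = 1%:M.
Proof. by rewrite /pmx pauli1_I kron2_1. Qed.

Lemma pmx_mul p q : pmx p *m pmx q = pauli_phase p q *: pmx (pauli_idx p q).
Proof. by rewrite /pmx kron2_mul !pauli1_mul kron2Z. Qed.

Lemma pauli_phase_neq0 p q : pauli_phase p q != 0.
Proof. exact: mulf_neq0 (pauli1_phase_neq0 _ _) (pauli1_phase_neq0 _ _). Qed.

Lemma pmx_sq p : pmx p *m pmx p = 1%:M.
Proof. by rewrite /pmx kron2_mul !pauli1_sq kron2_1. Qed.

Lemma pmx_hermitian p : pmx p \is hermsymmx.
Proof. exact/kron2_hermitian/pauli1_hermitian/pauli1_hermitian. Qed.

Lemma pmx_comm p q : pmx p *m pmx q = (-1) ^+ pauli_anti p q *: (pmx q *m pmx p).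
Proof. by rewrite /pmx !kron2_mul pauli1_comm (pauli1_comm p.2) kron2Z -signr_addb. Qed.

Lemma pmx_anti p q : pauli_anti p q -> pmx p *m pmx q = - (pmx q *m pmx p).
Proof. by move=> pq; rewrite pmx_comm pq scaleN1r. Qed.

Lemma pmx_commuteP p q :
  reflect (pmx p *m pmx q = pmx q *m pmx p) (pauli_commute p q).
Proof.
rewrite /pauli_commute; apply: (iffP idP) => [/negbTE pq | pq].
  by rewrite pmx_comm pq scale1r.
apply/negP => /pmx_anti; rewrite pq => /eqP.
rewrite -subr_eq0 opprK -mulr2n -scaler_nat scaler_eq0 pnatr_eq0 /= => /eqP qp0.
have : (pmx q *m pmx p) *m (pmx p *m pmx q) = 1%:M.
  by rewrite -mulmxA (mulmxA (pmx p)) pmx_sq mul1mx pmx_sq.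
by rewrite qp0 mul0mx => /matrixP/(_ 0 0); rewrite !mxE => /eqP; rewrite eq_sym oner_eq0.
Qed.

Lemma pauli_anti_I s : pauli_anti s (ord0, ord0) = false.
Proof. by rewrite /pauli_anti /pauli1_anti !andbF. Qed.

Lemma pmx_anti_mul s p q : pauli_anti s p (+) pauli_anti s q ->
  pmx s *m (pmx p *m pmx q) = - (pmx p *m pmx q *m pmx s).
Proof.
move=> spq; rewrite mulmxA pmx_comm -scalemxAl -mulmxA pmx_comm -scalemxAr mulmxA.
by rewrite scalerA -signr_addb spq expr1 scaleN1r.
Qed.

(** * Inner product and eigenvectors *)

Lemma dotvDl (u v w : 'cV[algC]_4) : dotv (u + v) w = dotv u w + dotv v w.
Proof. by rewrite /dotv -big_split; apply: eq_bigr => k _; rewrite !mxE rmorphD mulrDl. Qed.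

Lemma dotvDr (u v w : 'cV[algC]_4) : dotv u (v + w) = dotv u v + dotv u w.
Proof. by rewrite /dotv -big_split; apply: eq_bigr => k _; rewrite !mxE mulrDr. Qed.

Lemma dotvZl a (u v : 'cV[algC]_4) : dotv (a *: u) v = a^* * dotv u v.
Proof. by rewrite /dotv mulr_sumr; apply: eq_bigr => k _; rewrite !mxE rmorphM mulrA. Qed.

Lemma dotvZr a (u v : 'cV[algC]_4) : dotv u (a *: v) = a * dotv u v.
Proof. by rewrite /dotv mulr_sumr; apply: eq_bigr => k _; rewrite !mxE mulrCA. Qed.

Lemma dotvC (u v : 'cV[algC]_4) : dotv v u = (dotv u v)^*.
Proof.
by rewrite /dotv rmorph_sum; apply: eq_bigr => k _; rewrite rmorphM /= conjCK mulrC.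
Qed.

Lemma dotv_hermsymmx M (u v : 'cV[algC]_4) :
  M \is hermsymmx -> dotv (M *m u) v = dotv u (M *m v).
Proof.
move=> /hermsymmxP hM; rewrite /dotv.
under eq_bigr => k _ do rewrite mxE rmorph_sum mulr_suml.
under [RHS]eq_bigr => k _ do rewrite mxE mulr_sumr.
rewrite exchange_big; apply: eq_bigr => i _; apply: eq_bigr => j _.
by rewrite rmorphM /= -hM mulrCA mulrA.
Qed.

Definition eigvec (M : 'M[algC]_4) (v : 'cV[algC]_4) := exists mu, M *m v = mu *: v.

Lemma eigvecMZ c A B v : eigvec A v -> eigvec B v -> eigvec (c *: (A *m B)) v.
Proof.
rewrite /eigvec => -[mu Av] [nu Bv]; exists (c * nu * mu).
by rewrite -scalemxAl -mulmxA Bv -scalemxAr Av !scalerA.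
Qed.

Section HermitianInvolution.

Variable S : 'M[algC]_4.
Hypotheses (S_herm : S \is hermsymmx) (S_sq : S *m S = 1%:M).
Variables (a : 'cV[algC]_4) (mu : algC).
Hypotheses (a_unit : dotv a a = 1) (Sa : S *m a = mu *: a).

Lemma eigval_sq : mu * mu = 1.
Proof.
have a_eq : a = (mu * mu) *: a.
  by rewrite -scalerA -Sa scalemxAr -Sa mulmxA S_sq mul1mx.
by have := dotvZr (mu * mu) a a; rewrite -a_eq a_unit mulr1.
Qed.

Lemma eigval_real : mu^* = mu.
Proof.
by have := dotv_hermsymmx a a S_herm; rewrite Sa dotvZl dotvZr a_unit !mulr1.
Qed.

Lemma norm_eigval : `|mu| = 1.
Proof.
apply/eqP; rewrite -(@eqrXn2 _ 2) ?normr_ge0 // normCK eigval_real eigval_sq.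
by rewrite expr1n.
Qed.

Lemma dotv_anticomm K : S *m K = - (K *m S) -> dotv a (K *m a) = 0.
Proof.
move=> SK; have mu_neq0 : mu != 0.
  by apply: contra_eq_neq eigval_sq => ->; rewrite mul0r eq_sym oner_neq0.
have : dotv (S *m a) (K *m a) = - dotv (S *m a) (K *m a).
  rewrite {1}dotv_hermsymmx // mulmxA SK mulNmx -mulmxA Sa -scalemxAr -scaleNr.
  by rewrite dotvZr dotvZl eigval_real mulNr.
move/eqP; rewrite -subr_eq0 opprK -mulr2n mulrn_eq0 /= Sa dotvZl eigval_real.
by rewrite mulf_eq0 (negbTE mu_neq0) => /eqP.
Qed.

End HermitianInvolution.

Lemma dotv_eigvec_neq M (v w : 'cV[algC]_4) l m :
  M \is hermsymmx -> M *m v = l *: v -> M *m w = m *: w -> l^* = l -> l != m ->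
  dotv v w = 0.
Proof.
move=> hM Mv Mw l_real lm; have := dotv_hermsymmx v w hM.
rewrite Mv Mw dotvZl dotvZr l_real => /eqP; rewrite -subr_eq0 -mulrBl mulf_eq0.
by rewrite subr_eq0 (negbTE lm) => /eqP.
Qed.

Lemma norm_dotv_half (a b : 'cV[algC]_4) (M : 'I_4 -> 'M[algC]_4) :
  dotv a a = 1 -> dotv b b = 1 ->
  (forall j, M j \is hermsymmx) -> (forall j, M j *m M j = 1%:M) ->
  (forall j, eigvec (M j) b) ->
  (forall j k, j != k -> dotv a (M j *m M k *m a) = 0) ->
  `|dotv a b| = 2^-1.
Proof.
move=> a_unit b_unit M_herm M_sq Mb M_orth.
pose adj m n (A : 'M[algC]_(m, n)) := (map_mx (fun x => x^*) A)^T.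
have adjE (u v : 'cV[algC]_4) : (adj _ _ u *m v) 0 0 = dotv u v.
  by rewrite mxE; apply: eq_bigr => k _; rewrite !mxE.
pose X : 'M[algC]_4 := \matrix_(i, j) (M j *m a) i 0.
have colX j : col j X = M j *m a by apply/colP => i; rewrite !mxE.
have X_unitary : adj _ _ X *m X = 1%:M.
  apply/matrixP => i j; rewrite [LHS](_ : _ = dotv (col i X) (col j X)); last first.
    by rewrite mxE; apply: eq_bigr => k _; rewrite !mxE.
  rewrite !colX dotv_hermsymmx // mulmxA !mxE.
  by have [<-|ij] := eqVneq i j; [rewrite M_sq mul1mx | rewrite M_orth].
have overlap j : `|dotv (col j X) b| = `|dotv a b|.
  have [mu Mmu] := Mb j.
  rewrite colX dotv_hermsymmx // Mmu dotvZr normrM.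
  by rewrite (norm_eigval (M_herm j) (M_sq j) b_unit Mmu) mul1r.
have : 1 = ((adj _ _ b *m X) *m (adj _ _ X *m b)) 0 0.
  by rewrite mulmxA -(mulmxA _ X) (mulmx1C X_unitary) mulmx1 adjE b_unit.
rewrite mxE (eq_bigr (fun=> `|dotv a b| ^+ 2)); last first.
  move=> j _; rewrite -(overlap j) normCKC -dotvC; congr (_ * _).
    by rewrite mxE; apply: eq_bigr => k _; rewrite !mxE.
  by rewrite mxE; apply: eq_bigr => k _; rewrite !mxE.
rewrite sumr_const card_ord => four_sq.
have four_neq0 : (4%:R : algC) != 0 by rewrite pnatr_eq0.
apply/eqP; rewrite -(@eqrXn2 _ 2) ?normr_ge0 ?invr_ge0 ?ler0n // exprVn -natrX.
by rewrite -[X in X == _](mulfK four_neq0) mulr_natr -four_sq mul1r.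
Qed.

(* For an involution A, [proj A x] is twice the projection onto its (-1)^x-eigenspace. *)
Definition proj (A : 'M[algC]_4) (x : bool) : 'M[algC]_4 := 1%:M + (-1) ^+ x *: A.

Section Projections.

Variable A : 'M[algC]_4.
Hypothesis A_sq : A *m A = 1%:M.

Lemma mulmx_proj x : A *m proj A x = (-1) ^+ x *: proj A x.
Proof.
by rewrite mulmxDr mulmx1 -scalemxAr A_sq scalerDr scalerA -expr2 sqrr_sign scale1r addrC.
Qed.

Lemma proj_sq x : proj A x *m proj A x = 2%:R *: proj A x.
Proof.
rewrite {1}/proj mulmxDl mul1mx -scalemxAl mulmx_proj scalerA -expr2 sqrr_sign.
by rewrite scale1r scaler_nat mulr2n.
Qed.

End Projections.

Lemma dotv_proj A x (u v : 'cV[algC]_4) :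
  A \is hermsymmx -> dotv (proj A x *m u) v = dotv u (proj A x *m v).
Proof.
move=> A_herm; rewrite !mulmxDl !mul1mx -!scalemxAl dotvDl dotvDr dotvZl dotvZr.
by rewrite rmorph_sign dotv_hermsymmx.
Qed.

Lemma proj_comm A B x : A *m B = B *m A -> B *m proj A x = proj A x *m B.
Proof. by move=> AB; rewrite mulmxDr mulmxDl mul1mx mulmx1 -scalemxAr -scalemxAl AB. Qed.

Lemma proj_commute A B x y :
  A *m B = B *m A -> proj A x *m proj B y = proj B y *m proj A x.
Proof.
move=> AB; move: (proj B y) (proj_comm y (esym AB)) => pB ApB.
by rewrite /proj mulmxDl mulmxDr mul1mx mulmx1 -scalemxAl -scalemxAr ApB.
Qed.

Section CommonEigenbasis.

Variables P Q : 'M[algC]_4.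
Hypotheses (P_herm : P \is hermsymmx) (Q_herm : Q \is hermsymmx).
Hypotheses (P_sq : P *m P = 1%:M) (Q_sq : Q *m Q = 1%:M) (PQ : P *m Q = Q *m P).
Variable b : 'cV[algC]_4.
Hypotheses (b_unit : dotv b b = 1) (bP : dotv b (P *m b) = 0).
Hypotheses (bQ : dotv b (Q *m b) = 0) (bPQ : dotv b (P *m Q *m b) = 0).

Let W x y := proj P x *m proj Q y *m b.

Let mulmxPW x y : P *m W x y = (-1) ^+ x *: W x y.
Proof. by rewrite !mulmxA mulmx_proj // -!scalemxAl. Qed.

Let mulmxQW x y : Q *m W x y = (-1) ^+ y *: W x y.
Proof.
rewrite !mulmxA (proj_comm _ PQ) -(mulmxA (proj P x)) mulmx_proj //.
by rewrite -scalemxAr -scalemxAl.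
Qed.

Let dotv_bW x y : dotv b (W x y) = 1.
Proof.
rewrite /W /proj !(mulmxDl, mulmxDr, mul1mx, mulmx1) -!(scalemxAl, scalemxAr).
by rewrite !(dotvDr, dotvZr) b_unit bP bQ bPQ !mulr0 !addr0.
Qed.

Let dotv_WW x y : dotv (W x y) (W x y) = 4%:R.
Proof.
have projPW : proj P x *m W x y = 2%:R *: W x y.
  by rewrite /W !mulmxA proj_sq // -!scalemxAl.
have projQW : proj Q y *m W x y = 2%:R *: W x y.
  rewrite /W !mulmxA -(proj_commute _ _ PQ) -(mulmxA (proj P x)) proj_sq //.
  by rewrite -scalemxAr -scalemxAl.
rewrite {1}/W -mulmxA dotv_proj // projPW dotvZr dotv_proj // projQW dotvZr.
by rewrite dotv_bW mulr1 -natrM.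
Qed.

Lemma common_eigbasis :
  exists B, onb B /\ forall j, eigvec P (col j B) /\ eigvec Q (col j B).
Proof.
pose V (j : 'I_4) := 2^-1 *: W (2 <= j)%N (odd j).
pose B : 'M[algC]_4 := \matrix_(i, j) V j i 0.
have colB j : col j B = V j by apply/colP => i; rewrite !mxE.
have PV j : P *m V j = (-1) ^+ (2 <= j)%N *: V j.
  by rewrite -scalemxAr mulmxPW !scalerA mulrC.
have QV j : Q *m V j = (-1) ^+ odd j *: V j.
  by rewrite -scalemxAr mulmxQW !scalerA mulrC.
exists B; split=> [i j | j]; last by rewrite colB; split; eexists; [apply: PV | apply: QV].
rewrite !colB; have [<-|ij] := eqVneq i j.
  rewrite dotvZl dotvZr dotv_WW fmorphV /= conjC_nat mulrA -invfM -natrM mulVf //.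
  by rewrite pnatr_eq0.
have [hi_neq | hi_eq] := boolP ((2 <= i)%N != (2 <= j)%N).
  apply: (dotv_eigvec_neq P_herm (PV i) (PV j)); first exact: rmorph_sign.
  by rewrite (inj_eq signr_inj).
apply: (dotv_eigvec_neq Q_herm (QV i) (QV j)); first exact: rmorph_sign.
by rewrite (inj_eq signr_inj); move: hi_eq ij; case_I4 i; case_I4 j.
Qed.

End CommonEigenbasis.

(** * The maximal commuting classes *)

Definition paulis : seq pauli := [seq (a, b) | a <- ords4, b <- ords4].

Lemma mem_paulis p : p \in paulis.
Proof. by case: p => a b; apply: allpairs_f; apply: mem_ords4. Qed.

Definition line := (pauli * pauli * pauli)%type.

Definition line_elems (t : line) : seq pauli := [:: t.1.1; t.1.2; t.2].

Definition line_set (t : line) : {set pauli} := [set p in line_elems t].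

Definition line_op (t : line) (j : 'I_4) : pauli :=
  nth (ord0, ord0) [:: (ord0, ord0); t.1.1; t.1.2; t.2] j.

Definition disj (t t' : line) : bool := ~~ has (mem (line_elems t')) (line_elems t).

Definition pt (a b : nat) : pauli := (nth ord0 ords4 a, nth ord0 ords4 b).

Definition lines : seq line :=
  [:: (pt 0 1, pt 1 0, pt 1 1); (pt 0 1, pt 2 0, pt 2 1); (pt 0 1, pt 3 0, pt 3 1);
      (pt 0 2, pt 1 0, pt 1 2); (pt 0 2, pt 2 0, pt 2 2); (pt 0 2, pt 3 0, pt 3 2);
      (pt 0 3, pt 1 0, pt 1 3); (pt 0 3, pt 2 0, pt 2 3); (pt 0 3, pt 3 0, pt 3 3);
      (pt 1 1, pt 2 2, pt 3 3); (pt 1 1, pt 2 3, pt 3 2); (pt 1 2, pt 2 1, pt 3 3);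
      (pt 1 2, pt 2 3, pt 3 1); (pt 1 3, pt 2 1, pt 3 2); (pt 1 3, pt 2 2, pt 3 1)].

Lemma lines_wf :
  all (fun t => [&& uniq (line_elems t), all nonid (line_elems t),
                    all2rel pauli_commute (line_elems t) & t.2 == pauli_idx t.1.1 t.1.2])
      lines.
Proof. by vm_compute. Qed.

(* The finite checks below branch with [if] rather than [==>]: [vm_compute] evaluates
   arguments eagerly, so only [if] prunes the search. *)
Lemma commuting_triples_lines :
  all (fun x => all (fun y => all (fun z =>
    if [&& uniq [:: x; y; z], all nonid [:: x; y; z] & all2rel pauli_commute [:: x; y; z]]
    then has (fun t => perm_eq (line_elems t) [:: x; y; z]) lines else true)
  paulis) paulis) paulis.
Proof. by vm_compute. Qed.

Lemma disjoint_lines_separated :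
  all (fun t => all (fun t' => if disj t t' then
    all (fun j => all (fun k => if j != k then
      has (fun s => pauli_anti s (line_op t' j) (+) pauli_anti s (line_op t' k))
          (line_elems t) else true) ords4) ords4 else true) lines) lines.
Proof. by vm_compute. Qed.

Lemma disjoint_lines4_extend :
  all (fun t1 => all (fun t2 => if disj t1 t2 then
  all (fun t3 => if disj t1 t3 && disj t2 t3 then
  all (fun t4 => if [&& disj t1 t4, disj t2 t4 & disj t3 t4] then
    has (fun t5 => [&& disj t1 t5, disj t2 t5, disj t3 t5 & disj t4 t5]) lines else true)
  lines else true) lines else true) lines) lines.
Proof. by vm_compute. Qed.

Lemma line_maxclass t : t \in lines -> maxclass (line_set t).
Proof.
move=> t_line; have /and4P[t_uniq t_nonid t_comm _] := allP lines_wf t t_line.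
split; first by rewrite cardsE; apply/card_uniqP.
split=> [p | p q]; rewrite !in_set; first exact: (allP t_nonid).
by move=> p_in q_in; apply/pmx_commuteP; apply: (allrelP t_comm).
Qed.

Lemma maxclass_line C : maxclass C -> exists2 t, t \in lines & C = line_set t.
Proof.
case=> C_card [C_nonid C_comm]; move: C_card; rewrite cardE.
case E: (enum C) => [|x [|y [|z []]]] // _.
have mem_xyz p : (p \in [:: x; y; z]) = (p \in C) by rewrite -E mem_enum.
have xyz_uniq : uniq [:: x; y; z] by rewrite -E enum_uniq.
have xyz_nonid : all nonid [:: x; y; z].
  by apply/allP => p; rewrite mem_xyz; apply: C_nonid.
have xyz_comm : all2rel pauli_commute [:: x; y; z].
  by apply/allrelP => p q; rewrite !mem_xyz => pC qC; apply/pmx_commuteP/C_comm.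
have /hasP[t t_line t_perm] : has (fun t => perm_eq (line_elems t) [:: x; y; z]) lines.
  move: commuting_triples_lines => /allP/(_ x (mem_paulis x)).
  move=> /allP/(_ y (mem_paulis y))/allP/(_ z (mem_paulis z)).
  by rewrite xyz_uniq xyz_nonid xyz_comm.
by exists t => //; apply/setP => p; rewrite in_set (perm_mem t_perm) mem_xyz.
Qed.

Lemma disjoint_line_set t t' : [disjoint line_set t & line_set t'] = disj t t'.
Proof.
have line_setE u : line_set u =i line_elems u by move=> p; rewrite in_set.
rewrite (eq_disjoint (line_setE t)) disjoint_has; congr (~~ _).
by apply: eq_has => p; rewrite /= line_setE.
Qed.

Lemma separating_elem t t' j k :
  t \in lines -> t' \in lines -> disj t t' -> j != k ->
  exists2 s, s \in line_elems t & pauli_anti s (line_op t' j) (+) pauli_anti s (line_op t' k).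
Proof.
move=> t_line t'_line tt' jk.
move: disjoint_lines_separated => /allP/(_ t t_line)/allP/(_ t' t'_line); rewrite tt'.
move=> /allP/(_ j (mem_ords4 j))/allP/(_ k (mem_ords4 k)); rewrite jk.
by move=> /hasP[s s_in s_sep]; exists s.
Qed.

Lemma extend_disjoint_lines t1 t2 t3 t4 :
  t1 \in lines -> t2 \in lines -> t3 \in lines -> t4 \in lines ->
  [&& disj t1 t2, disj t1 t3, disj t1 t4, disj t2 t3, disj t2 t4 & disj t3 t4] ->
  exists2 t5, t5 \in lines & [&& disj t1 t5, disj t2 t5, disj t3 t5 & disj t4 t5].
Proof.
move=> t1_line t2_line t3_line t4_line /and5P[d12 d13 d14 d23 /andP[d24 d34]].
move: disjoint_lines4_extend => /allP/(_ t1 t1_line)/allP/(_ t2 t2_line); rewrite d12.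
move=> /allP/(_ t3 t3_line); rewrite d13 d23 => /allP/(_ t4 t4_line).
by rewrite d14 d24 d34 => /hasP[t5]; exists t5.
Qed.

(** * Unbiased eigenbases of disjoint classes *)

Lemma line_op0 t : line_op t ord0 = (ord0, ord0).
Proof. by []. Qed.

Lemma line_op_in t k : k != ord0 -> line_op t k \in line_set t.
Proof. by rewrite in_set; case_I4 k; rewrite !inE eqxx ?orbT. Qed.

Lemma invsqrtC4 : (sqrtC 4%:R : algC)^-1 = 2^-1.
Proof. by rewrite -[4%N]/(2 ^ 2)%N natrX sqrCK ?ler0n. Qed.

Section DisjointLines.

Variables t t' : line.
Hypotheses (t_line : t \in lines) (t'_line : t' \in lines) (tt' : disj t t').

Lemma dotv_line_op_eq0 b k :
  dotv b b = 1 -> (forall s, s \in line_elems t -> eigvec (pmx s) b) -> k != ord0 ->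
  dotv b (pmx (line_op t' k) *m b) = 0.
Proof.
move=> b_unit b_eig k0; rewrite eq_sym in k0.
have [s s_in] := separating_elem t_line t'_line tt' k0.
rewrite line_op0 pauli_anti_I => s_anti; have [mu s_mu] := b_eig s s_in.
exact: (dotv_anticomm (pmx_hermitian s) (pmx_sq s) b_unit s_mu (pmx_anti s_anti)).
Qed.

Lemma unbiased_disjoint_lines B B' :
  eigbasis (line_set t) B -> eigbasis (line_set t') B' -> unbiased B B'.
Proof.
move=> [B_onb B_eig] [B'_onb B'_eig] i j; rewrite invsqrtC4.
apply: (norm_dotv_half (M := fun k => pmx (line_op t' k))); rewrite ?B_onb ?B'_onb ?eqxx //.
- by move=> k; apply: pmx_hermitian.
- by move=> k; apply: pmx_sq.
- move=> k; have [-> | k0] := eqVneq k ord0.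
    by exists 1; rewrite line_op0 pmx_I mul1mx scale1r.
  exact: B'_eig _ (line_op_in _ k0) j.
move=> k l kl; have [s s_in s_sep] := separating_elem t_line t'_line tt' kl.
have [mu s_mu] : eigvec (pmx s) (col i B) by apply: B_eig; rewrite in_set.
apply: (dotv_anticomm (pmx_hermitian s) (pmx_sq s) _ s_mu); first by rewrite B_onb eqxx.
exact: pmx_anti_mul.
Qed.

End DisjointLines.

Lemma line_eigbasis t b : t \in lines -> dotv b b = 1 ->
  (forall k, k != ord0 -> dotv b (pmx (line_op t k) *m b) = 0) ->
  exists B, eigbasis (line_set t) B.
Proof.
move=> t_line b_unit b0.
have /and4P[_ _ t_comm /eqP t3] := allP lines_wf t t_line.
have PQ : pmx t.1.1 *m pmx t.1.2 = pmx t.1.2 *m pmx t.1.1.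
  by apply/pmx_commuteP/(allrelP t_comm); rewrite !inE eqxx ?orbT.
have R_PQ : pmx t.2 = (pauli_phase t.1.1 t.1.2)^-1 *: (pmx t.1.1 *m pmx t.1.2).
  by rewrite pmx_mul -t3 scalerA mulVf ?pauli_phase_neq0 ?scale1r.
have bPQ : dotv b (pmx t.1.1 *m pmx t.1.2 *m b) = 0.
  rewrite pmx_mul -t3 -scalemxAl dotvZr.
  by rewrite (b0 (Ordinal (isT : 3 < 4)%N)) ?mulr0.
have [B [B_onb B_eig]] := common_eigbasis (pmx_hermitian _) (pmx_hermitian _)
  (pmx_sq _) (pmx_sq _) PQ b_unit (b0 (Ordinal (isT : 1 < 4)%N) isT)
  (b0 (Ordinal (isT : 2 < 4)%N) isT) bPQ.
exists B; split=> // p; rewrite in_set !inE => /or3P[] /eqP-> j; have [Pj Qj] := B_eig j.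
- exact: Pj.
- exact: Qj.
by rewrite R_PQ; apply: eigvecMZ.
Qed.

Theorem theorem2 (C1 C2 : {set pauli}) :
  maxclass C1 -> maxclass C2 -> C1 != C2 ->
  (exists S, complete_set S /\ C1 \in S /\ C2 \in S) ->
  ~ (exists (C3 C4 : {set pauli}) (B1 B2 B3 B4 : 'M[algC]_4),
        [/\ maxclass C3, maxclass C4,
            [&& [disjoint C1 & C2], [disjoint C1 & C3], [disjoint C1 & C4],
                [disjoint C2 & C3], [disjoint C2 & C4] & [disjoint C3 & C4]],
            [/\ eigbasis C1 B1, eigbasis C2 B2, eigbasis C3 B3 & eigbasis C4 B4]
          & weakly_unextendible [:: B1; B2; B3; B4]]).
Proof.
move=> C1_max C2_max _ _ [C3 [C4 [B1 [B2 [B3 [B4 [C3_max C4_max disj_C eig_B no_ext]]]]]]].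
have [t1 t1_line E1] := maxclass_line C1_max.
have [t2 t2_line E2] := maxclass_line C2_max.
have [t3 t3_line E3] := maxclass_line C3_max.
have [t4 t4_line E4] := maxclass_line C4_max.
move: disj_C eig_B; rewrite E1 E2 E3 E4 !disjoint_line_set => disj_t [e1 e2 e3 e4].
have [t5 t5_line /and4P[d15 d25 d35 d45]] :=
  extend_disjoint_lines t1_line t2_line t3_line t4_line disj_t.
have [B5 e5] : exists B, eigbasis (line_set t5) B.
  have [B1_onb B1_eig] := e1.
  have b_unit : dotv (col 0 B1) (col 0 B1) = 1 by rewrite B1_onb eqxx.
  apply: (line_eigbasis t5_line b_unit) => k.
  apply: (dotv_line_op_eq0 t1_line t5_line d15 b_unit) => s s_in.
  by apply: B1_eig; rewrite in_set.
case: no_ext => _; apply; exists (line_set t5), B5.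
split; [exact: line_maxclass | split => // B; rewrite !inE => /or4P[] /eqP->].
- exact (unbiased_disjoint_lines t1_line t5_line d15 e1 e5).
- exact (unbiased_disjoint_lines t2_line t5_line d25 e2 e5).
- exact (unbiased_disjoint_lines t3_line t5_line d35 e3 e5).
- exact (unbiased_disjoint_lines t4_line t5_line d45 e4 e5).
Qed.
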